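(* For each of the following four pairs $T=(T_1,T_2)$: (i) $T_1=\begin{pmatrix}1&0\\1&0\end{pmatrix}$, $T_2=\begin{pmatrix}1&1\\1&0\end{pmatrix}$; (ii) $T_1=\begin{pmatrix}1&0\\1&0\end{pmatrix}$, $T_2=\begin{pmatrix}1&1\\0&1\end{pmatrix}$; (iii) $T_1=\begin{pmatrix}1&0\\1&0\end{pmatrix}$, $T_2=\begin{pmatrix}1&1\\1&1\end{pmatrix}$; (iv) $T_1=\begin{pmatrix}1&0\\0&1\end{pmatrix}$, $T_2=\begin{pmatrix}1&1\\1&1\end{pmatrix}$, one has $h(T)=\frac{1}{\lambda^2}\ln 2$, where $\lambda=\frac{1+\sqrt5}{2}$.
   Context: Define $\gamma^{[s_j]}_{i,n}$ ($i,j\in\{1,2\}$, $n\ge0$) by $\gamma^{[s_j]}_{i,0}=1$ and for $n\ge1$ $$\gamma^{[s_1]}_{i,n}=\sum_{j,k=1}^2T_1(i,j)T_2(i,k)\,\gamma^{[s_1]}_{j,n-1}\gamma^{[s_2]}_{k,n-1},\qquad \gamma^{[s_2]}_{i,n}=\sum_{j=1}^2T_1(i,j)\,\gamma^{[s_1]}_{j,n-1}.$$ Let $l_0=1$, $l_1=2$, $l_{k+1}=l_k+l_{k-1}$, $|E_n|=\sum_{k=0}^nl_k$ (the number of elements of word length $\le n$ in the monoid $G=\langle s_1,s_2\mid s_2s_2=s_2\rangle$), and $h(T)=\limsup_{n\to\infty}\frac{\ln(\gamma^{[s_1]}_{1,n}+\gamma^{[s_1]}_{2,n})}{|E_n|}$,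 the paper's entropy of the $G$-vertex shift with adjacency matrices $T=(T_1,T_2)$ over $\{1,2\}$. *)

From Stdlib Require Import Reals.
From Coquelicot Require Import Coquelicot.
Open Scope R_scope.

Definition mat2 (a b c d : R) : nat -> nat -> R :=
  fun i j => match i, j with
             | 1%nat, 1%nat => a | 1%nat, 2%nat => b
             | 2%nat, 1%nat => c | 2%nat, 2%nat => d
             | _, _ => 0 end.

(* gam T1 T2 n = (gamma^[s1]_{.,n}, gamma^[s2]_{.,n}), as functions of i in {1,2}. *)
Fixpoint gam (T1 T2 : nat -> nat -> R) (n : nat) : (nat -> R) * (nat -> R) :=
  match n with
  | O => (fun _ => 1, fun _ => 1)
  | S m =>
    let g := gam T1 T2 m in
    (fun i => T1 i 1%nat * T2 i 1%nat * fst g 1%nat * snd g 1%nat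
            + T1 i 1%nat * T2 i 2%nat * fst g 1%nat * snd g 2%nat
            + T1 i 2%nat * T2 i 1%nat * fst g 2%nat * snd g 1%nat
            + T1 i 2%nat * T2 i 2%nat * fst g 2%nat * snd g 2%nat,
     fun i => T1 i 1%nat * fst g 1%nat + T1 i 2%nat * fst g 2%nat)
  end.

Definition gamma_s1 T1 T2 (i n : nat) : R := fst (gam T1 T2 n) i.
Definition gamma_s2 T1 T2 (i n : nat) : R := snd (gam T1 T2 n) i.

Fixpoint lseq (k : nat) : nat :=
  match k with
  | O => 1%nat
  | S O => 2%nat
  | S ((S k') as k1) => (lseq k1 + lseq k')%nat
  end.

(* |E_n| = sum_{k=0}^n l_k  (sum_f_R0 f n has n+1 terms) *)
Definition card_E (n : nat) : R := sum_f_R0 (fun k => INR (lseq k)) n.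

Definition entropy (T1 T2 : nat -> nat -> R) : Rbar :=
  LimSup_seq (fun n => ln (gamma_s1 T1 T2 1 n + gamma_s1 T1 T2 2 n) / card_E n).

Definition golden : R := (1 + sqrt 5) / 2.

(* In all four cases the recursion keeps gamma^[s2]_{1,n} = gamma^[s2]_{2,n}
   and gamma^[s1]_{2,n} a fixed multiple of gamma^[s1]_{1,n}, so that
   a_n := gamma^[s1]_{1,n} satisfies a_{n+1} = 2 a_n a_{n-1}, i.e.
   2 a_n = 2^(F_{n+2}) with F the Fibonacci numbers.  As |E_n| = F_{n+4} - 2 and
   F_{n+4} = lambda^2 F_{n+2} + psi^(n+2) with |psi| < 1, the quotient in h(T)
   converges to ln 2 / lambda^2. *)

From Stdlib Require Import Reals Lra Lia.
From Coquelicot Require Import Coquelicot.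
Open Scope R_scope.

Fixpoint fib (n : nat) : nat :=
  match n with
  | O => 0%nat
  | S O => 1%nat
  | S ((S k) as k1) => (fib k1 + fib k)%nat
  end.

Lemma fib_SS k : fib (S (S k)) = (fib (S k) + fib k)%nat.
Proof. reflexivity. Qed.

Lemma fib_S_pos n : (0 < fib (S n))%nat.
Proof. induction n as [|n IH]; [simpl; lia | rewrite fib_SS; lia]. Qed.

Lemma fib_SS_ge n : (S n <= fib (S (S n)))%nat.
Proof.
  induction n as [|n IH]; [simpl; lia|].
  rewrite fib_SS. pose proof (fib_S_pos n). lia.
Qed.

Lemma lseq_fib k : lseq k = fib (S (S k)).
Proof.
  enough (H : lseq k = fib (S (S k)) /\ lseq (S k) = fib (S (S (S k)))) by apply H.
  induction k as [|k [IH IHS]]; [split; reflexivity|].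
  split; [exact IHS|].
  change (lseq (S (S k))) with (lseq (S k) + lseq k)%nat.
  rewrite IH, IHS, (fib_SS (S (S k))). lia.
Qed.

Lemma card_E_fib n : card_E n = INR (fib (S (S (S (S n))))) - 2.
Proof.
  unfold card_E. induction n as [|n IH]; [simpl; lra|].
  rewrite tech5, IH, lseq_fib, (fib_SS (S (S (S n)))), plus_INR. lra.
Qed.

Definition golden_conj : R := (1 - sqrt 5) / 2.

Lemma sqrt5_bounds : 2 < sqrt 5 < 3.
Proof.
  pose proof (sqrt_sqrt 5 ltac:(lra)). pose proof (sqrt_pos 5). split; nra.
Qed.

Lemma golden_add_conj : golden + golden_conj = 1.
Proof. unfold golden, golden_conj. lra. Qed.

Lemma golden_mul_conj : golden * golden_conj = -1.
Proof.
  pose proof (sqrt_sqrt 5 ltac:(lra)). unfold golden, golden_conj. nra.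
Qed.

Lemma golden_pos : 0 < golden.
Proof. pose proof sqrt5_bounds. unfold golden. lra. Qed.

Lemma Rabs_golden_conj_lt1 : Rabs golden_conj < 1.
Proof. pose proof sqrt5_bounds. unfold golden_conj. apply Rabs_def1; lra. Qed.

Lemma fib_S_sub_golden n :
  INR (fib (S n)) - golden * INR (fib n) = golden_conj ^ n.
Proof.
  induction n as [|n IH]; [simpl; lra|].
  rewrite fib_SS, plus_INR, <- tech_pow_Rmult, <- IH.
  replace golden_conj with (1 - golden) by (pose proof golden_add_conj; lra).
  assert (Hsq : golden * golden = golden + 1)
    by (pose proof golden_mul_conj; pose proof golden_add_conj; nra).
  pose proof (f_equal (Rmult (INR (fib n))) Hsq). lra.
Qed.

Lemma fib_SS_golden n :
  INR (fib (S (S n))) = golden ^ 2 * INR (fib n) + golden_conj ^ n.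
Proof.
  pose proof (fib_S_sub_golden (S n)). pose proof (fib_S_sub_golden n).
  pose proof golden_add_conj. rewrite <- tech_pow_Rmult in *. nra.
Qed.

(* Stated without any non-vanishing hypothesis on [k * x n + e n]:
   both sides are [0] when it vanishes, since [/ 0 = 0]. *)
Lemma is_lim_seq_affine_ratio (x e : nat -> R) (a c k l : R) :
  is_lim_seq x p_infty -> is_lim_seq e l -> k <> 0 ->
  is_lim_seq (fun n => (c + a * x n) / (k * x n + e n)) (a / k).
Proof.
  intros Hx He Hk.
  assert (Hinv : is_lim_seq (fun n => / x n) 0).
  { replace (Finite 0) with (Rbar_inv p_infty) by reflexivity.
    apply is_lim_seq_inv; [exact Hx | discriminate]. }
  apply is_lim_seq_ext_loc with
    (fun n => (c * / x n + a) / (k + e n * / x n)).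
  - destruct (proj2 (is_lim_seq_spec x p_infty) Hx 0) as [N HN].
    exists N; intros n Hn. assert (Hx0 : x n <> 0) by (specialize (HN n Hn); lra).
    replace (c * / x n + a) with ((c + a * x n) * / x n) by (field; exact Hx0).
    replace (k + e n * / x n) with ((k * x n + e n) * / x n) by (field; exact Hx0).
    unfold Rdiv. rewrite Rinv_mult, Rinv_inv.
    transitivity ((c + a * x n) * / (k * x n + e n) * (/ x n * x n)); [ring|].
    rewrite Rinv_l by exact Hx0. ring.
  - replace (a / k) with ((c * 0 + a) / (k + l * 0)) by (field; exact Hk).
    apply is_lim_seq_div'; [| | rewrite Rmult_0_r, Rplus_0_r; exact Hk].
    + apply is_lim_seq_plus'; [apply is_lim_seq_mult' | apply is_lim_seq_const].
      * apply is_lim_seq_const.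
      * exact Hinv.
    + apply is_lim_seq_plus'; [apply is_lim_seq_const | apply is_lim_seq_mult'].
      * exact He.
      * exact Hinv.
Qed.

Lemma is_lim_seq_fib : is_lim_seq (fun n => INR (fib (S (S n)))) p_infty.
Proof.
  apply is_lim_seq_le_p_loc with INR; [| exact is_lim_seq_INR].
  exists O; intros n _. apply le_INR. pose proof (fib_SS_ge n). lia.
Qed.

Lemma is_lim_seq_golden_conj_pow :
  is_lim_seq (fun n => golden_conj ^ S (S n) - 2) (-2).
Proof.
  replace (-2) with (0 - 2) by ring.
  apply is_lim_seq_minus'; [| apply is_lim_seq_const].
  apply is_lim_seq_ext with (fun n => golden_conj ^ (n + 2)).
  - intro n. f_equal. lia.
  - apply (is_lim_seq_incr_n (fun n => golden_conj ^ n) 2).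
    apply is_lim_seq_geom, Rabs_golden_conj_lt1.
Qed.

Lemma entropy_of_sum_eq T1 T2 C :
  0 < C ->
  (forall n, (1 <= n)%nat ->
     gamma_s1 T1 T2 1 n + gamma_s1 T1 T2 2 n = C * 2 ^ fib (S (S n))) ->
  entropy T1 T2 = Finite (ln 2 / golden ^ 2).
Proof.
  intros HC Hsum. unfold entropy.
  apply is_LimSup_seq_unique, is_lim_LimSup_seq.
  apply is_lim_seq_ext_loc with (fun n =>
    (ln C + ln 2 * INR (fib (S (S n))))
    / (golden ^ 2 * INR (fib (S (S n))) + (golden_conj ^ S (S n) - 2))).
  - exists 1%nat; intros n Hn.
    rewrite Hsum by exact Hn.
    rewrite ln_mult, ln_pow, card_E_fib, (fib_SS_golden (S (S n)))
      by (try apply pow_lt; lra).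
    f_equal; ring.
  - apply is_lim_seq_affine_ratio with (-2).
    + exact is_lim_seq_fib.
    + exact is_lim_seq_golden_conj_pow.
    + pose proof golden_pos. apply pow_nonzero. lra.
Qed.

Lemma gamma_s1_S T1 T2 i n : gamma_s1 T1 T2 i (S n) =
  T1 i 1%nat * T2 i 1%nat * gamma_s1 T1 T2 1 n * gamma_s2 T1 T2 1 n
  + T1 i 1%nat * T2 i 2%nat * gamma_s1 T1 T2 1 n * gamma_s2 T1 T2 2 n
  + T1 i 2%nat * T2 i 1%nat * gamma_s1 T1 T2 2 n * gamma_s2 T1 T2 1 n
  + T1 i 2%nat * T2 i 2%nat * gamma_s1 T1 T2 2 n * gamma_s2 T1 T2 2 n.
Proof. reflexivity. Qed.

Lemma gamma_s2_S T1 T2 i n : gamma_s2 T1 T2 i (S n) =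
  T1 i 1%nat * gamma_s1 T1 T2 1 n + T1 i 2%nat * gamma_s1 T1 T2 2 n.
Proof. reflexivity. Qed.

Lemma pow2_fib_SS n : 2 ^ fib (S (S n)) = 2 ^ fib (S n) * 2 ^ fib n.
Proof. rewrite fib_SS, pow_add. reflexivity. Qed.

Section FirstColumn.

Variables c d : R.
Let T1 := mat2 1 0 1 0.
Let T2 := mat2 1 1 c d.

Lemma gamma_first_column n :
  gamma_s1 T1 T2 1 n = 2 ^ fib (S (S n)) / 2 /\
  gamma_s2 T1 T2 1 n = 2 ^ fib (S n) / 2 /\
  gamma_s2 T1 T2 2 n = 2 ^ fib (S n) / 2.
Proof.
  induction n as [|n [H1 [H2 H3]]]; [unfold gamma_s1, gamma_s2; simpl; lra|].
  rewrite !gamma_s1_S, !gamma_s2_S, H1, H2, H3, (pow2_fib_SS (S n)).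
  unfold T1, T2; cbn [mat2]. repeat split; field.
Qed.

Hypothesis Hcd : c + d = 1.

Lemma gamma_s1_sum_first_column n : (1 <= n)%nat ->
  gamma_s1 T1 T2 1 n + gamma_s1 T1 T2 2 n = 3 / 4 * 2 ^ fib (S (S n)).
Proof.
  destruct n as [|n]; [lia|]. intros _.
  destruct (gamma_first_column n) as [H1 [H2 H3]].
  rewrite !gamma_s1_S, H1, H2, H3, (pow2_fib_SS (S n)).
  unfold T1, T2; cbn [mat2].
  replace d with (1 - c) by lra. field.
Qed.

End FirstColumn.

Section AllOnes.

Variables a b : R.
Hypothesis Hab : a + b = 1.
Let T1 := mat2 1 0 a b.
Let T2 := mat2 1 1 1 1.

Lemma gamma_all_ones n :
  gamma_s1 T1 T2 1 n = 2 ^ fib (S (S n)) / 2 /\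
  gamma_s1 T1 T2 2 n = 2 ^ fib (S (S n)) / 2 /\
  gamma_s2 T1 T2 1 n = 2 ^ fib (S n) / 2 /\
  gamma_s2 T1 T2 2 n = 2 ^ fib (S n) / 2.
Proof.
  induction n as [|n [H1 [H2 [H3 H4]]]]; [unfold gamma_s1, gamma_s2; simpl; lra|].
  rewrite !gamma_s1_S, !gamma_s2_S, H1, H2, H3, H4, (pow2_fib_SS (S n)).
  unfold T1, T2; cbn [mat2].
  replace b with (1 - a) by lra. repeat split; field.
Qed.

Lemma gamma_s1_sum_all_ones n :
  gamma_s1 T1 T2 1 n + gamma_s1 T1 T2 2 n = 2 ^ fib (S (S n)).
Proof. destruct (gamma_all_ones n) as [H1 [H2 _]]. lra. Qed.

End AllOnes.

Theorem corollary1 :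
  entropy (mat2 1 0 1 0) (mat2 1 1 1 0) = Finite (ln 2 / golden ^ 2) /\
  entropy (mat2 1 0 1 0) (mat2 1 1 0 1) = Finite (ln 2 / golden ^ 2) /\
  entropy (mat2 1 0 1 0) (mat2 1 1 1 1) = Finite (ln 2 / golden ^ 2) /\
  entropy (mat2 1 0 0 1) (mat2 1 1 1 1) = Finite (ln 2 / golden ^ 2).
Proof.
  split; [|split; [|split]].
  - apply entropy_of_sum_eq with (3 / 4); [lra|].
    apply gamma_s1_sum_first_column; lra.
  - apply entropy_of_sum_eq with (3 / 4); [lra|].
    apply gamma_s1_sum_first_column; lra.
  - apply entropy_of_sum_eq with 1; [lra|].
    intros n _; rewrite Rmult_1_l; apply gamma_s1_sum_all_ones; lra.
  - apply entropy_of_sum_eq with 1; [lra|].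
    intros n _; rewrite Rmult_1_l; apply gamma_s1_sum_all_ones; lra.
Qed.
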